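(* Let $\Gamma$ be an $l$-hyperflower with $t$ twins on $N$ vertices, with eigenvalues $\lambda_1\le\cdots\le\lambda_N$ of its (signless) normalized Laplacian. Then the spectrum of $\Gamma$ is given by: $0$, with multiplicity $N-l$; $t$, with multiplicity $l-1$; and $\lambda_N=N-tl+t$.
   Context: A hypergraph $\Gamma=(\mathcal{V},\mathcal{H})$ has a finite vertex set $\mathcal{V}=\{v_1,\ldots,v_N\}$ and a set $\mathcal{H}$ of nonempty subsets of $\mathcal{V}$ (hyperedges); standing assumption: no isolated vertices. $\deg(v)$ is the number of hyperedges containing $v$, $D$ the diagonal degree matrix, $A$ the matrix with $A_{ii}=0$ and $A_{ij}=-\#\{h\in\mathcal{H}: v_i,v_j\in h\}$ for $i\ne j$, and the (signless) normalized Laplacian is $L=\mathrm{Id}-D^{-1}A$, with real eigenvalues $\lambda_1\le\cdots\le\lambda_N$. An $l$-hyperflower with $t$ twins is a hypergraph whose vertex set is $\mathcal{V}=U\sqcup\mathcal{W}$, where $U$ consists of $t\cdot l$ distinct peripheral vertices $v_{zj}$ ($z=1,\ldots,t$, $j=1,\ldots,l$), and there is a nonempty set $h_1\subseteq\mathcal{W}$ such that $\mathcal{H}=\{h_1\cup\{v_{1j},\ldots,v_{tj}\}: j=1,\ldots,l\}$ (by the no-isolated-vertex assumption, $\mathcal{W}=h_1$). *)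

From mathcomp Require Import all_boot all_order all_algebra.
Set Implicit Arguments. Unset Strict Implicit. Unset Printing Implicit Defensive.
Import Order.TTheory GRing.Theory Num.Theory.
Local Open Scope ring_scope.

Section Hyper.
Variable N : nat.
Implicit Types H : {set {set 'I_N}}.

Definition no_isolated H : Prop := forall x : 'I_N, exists2 h, h \in H & x \in h.

Definition hdeg H (i : 'I_N) : nat := #|[set h in H | i \in h]|.

Definition hcommon H (i j : 'I_N) : nat := #|[set h in H | (i \in h) && (j \in h)]|.

Variable R : realFieldType.

Definition hadj H : 'M[R]_N :=
  \matrix_(i, j) (if i == j then 0 else - (hcommon H i j)%:R).

Definition hdegmx H : 'M[R]_N := diag_mx (\row_i (hdeg H i)%:R).

Definition nlap H : 'M[R]_N := 1%:M - invmx (hdegmx H) *m hadj H.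

End Hyper.

(* H is an l-hyperflower with t twins: there are t*l distinct peripheral
   vertices v (z, j) and a nonempty set h1 of non-peripheral vertices with
   H = { h1 ∪ {v(1,j),...,v(t,j)} : j = 1..l }. *)
Definition is_hyperflower (N l t : nat) (H : {set {set 'I_N}}) : Prop :=
  exists (v : 'I_t * 'I_l -> 'I_N) (h1 : {set 'I_N}),
    [/\ injective v,
        h1 != set0,
        h1 :&: [set v p | p : 'I_t * 'I_l] = set0 &
        H = [set h1 :|: [set v (z, j) | z : 'I_t] | j : 'I_l]].

From mathcomp Require Import all_boot all_order all_algebra.
Import Order.TTheory GRing.Theory Num.Theory.
Local Open Scope ring_scope.

(* The signless normalized Laplacian factors as L = D^-1 B B^T, with B the
   vertex-edge incidence matrix, so by Sylvester's determinant identity its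
   characteristic polynomial is X^(N-l) times that of the l x l matrix
   B^T D^-1 B.  In a hyperflower the k = N - tl central vertices lie in every
   edge and have degree l, while each peripheral vertex lies in one edge only;
   hence B^T D^-1 B = t I + (k/l) J, whose eigenvalues are t, with multiplicity
   l - 1, and t + k. *)

Set Implicit Arguments.
Unset Strict Implicit.
Unset Printing Implicit Defensive.

(* Both sides are \det [[y, M], [P, 1]] * y ^+ m, by two block factorizations. *)
Lemma det_scalar_sub_mulmxC (R : comNzRingType) n m (y : R)
    (M : 'M[R]_(n, m)) (P : 'M[R]_(m, n)) :
  \det (y%:M - M *m P) * y ^+ m = y ^+ n * \det (y%:M - P *m M).
Proof.
have blockE : block_mx (y%:M : 'M_n) M P (1%:M : 'M_m) =
          block_mx 1%:M M 0 1%:M *m block_mx (y%:M - M *m P) 0 P 1%:M.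
  by rewrite mulmx_block !mul1mx !mul0mx !mulmx1 !add0r subrK.
have blockU : block_mx (y%:M : 'M_n) M P (1%:M : 'M_m) *m block_mx 1%:M (- M) 0 y%:M =
          block_mx y%:M 0 P (y%:M - P *m M).
  rewrite mulmx_block !mulmx1 !mulmx0 !addr0 mul1mx mul_scalar_mx mul_mx_scalar.
  by rewrite mulmxN scalerN addNr addrC.
have := congr1 determinant blockU.
rewrite det_mulmx det_lblock det_ublock blockE det_mulmx det_ublock det_lblock.
by rewrite !det1 !det_scalar !mul1r mulr1 => ->.
Qed.

Lemma char_poly_mulmxC (R : comNzRingType) n m (M : 'M[R]_(n, m)) (P : 'M[R]_(m, n)) :
  char_poly (M *m P) * 'X^m = 'X^n * char_poly (P *m M).
Proof. by rewrite /char_poly /char_poly_mx !map_mxM det_scalar_sub_mulmxC. Qed.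

Lemma char_poly_scalar_add_rank1 (R : idomainType) n (a : R)
    (c : 'cV[R]_n) (r : 'rV[R]_n) : (0 < n)%N ->
  char_poly (a%:M + c *m r) = ('X - a%:P) ^+ n.-1 * ('X - (a + (r *m c) 0 0)%:P).
Proof.
move=> n_gt0; set y := 'X - a%:P.
have y_neq0 : y != 0 by rewrite polyXsubC_eq0.
have charE : char_poly_mx (a%:M + c *m r) = y%:M - map_mx polyC c *m map_mx polyC r.
  by rewrite /char_poly_mx map_mxD map_scalar_mx map_mxM opprD addrA -raddfB.
apply: (mulIf y_neq0); rewrite /char_poly charE -[X in \det _ * X]expr1.
rewrite det_scalar_sub_mulmxC.
rewrite -map_mxM {1}[r *m c]mx11_scalar map_scalar_mx -raddfB det_scalar1.
by rewrite polyCD opprD addrA -/y mulrAC -exprSr prednK.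
Qed.

Lemma char_poly_scalar_add_const (R : idomainType) n (a b : R) : (0 < n)%N ->
  char_poly (a%:M + const_mx b : 'M_n) = ('X - a%:P) ^+ n.-1 * ('X - (a + n%:R * b)%:P).
Proof.
move=> n_gt0; have -> : const_mx b = (const_mx b : 'cV_n) *m (const_mx 1 : 'rV_n) :> 'M_n.
  by apply/matrixP => i j; rewrite !mxE big_ord1 !mxE mulr1.
rewrite char_poly_scalar_add_rank1 // !mxE.
by under eq_bigr => j _ do rewrite !mxE mul1r; rewrite sumr_const card_ord mulr_natl.
Qed.

Lemma invmx_diag (F : fieldType) n (d : 'rV[F]_n) : (forall i, d 0 i != 0) ->
  invmx (diag_mx d) = diag_mx (\row_i (d 0 i)^-1).
Proof.
move=> d_neq0; have dV : diag_mx d *m diag_mx (\row_i (d 0 i)^-1) = 1%:M.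
  apply/matrixP => i j; rewrite mul_diag_mx !mxE.
  by case: eqP => [->|_]; rewrite ?mulr1n ?mulr0n ?mulfV ?mulr0.
have [d_unit _] := mulmx1_unit dV.
by rewrite -[invmx _]mulmx1 -dV mulmxA mulVmx ?mul1mx.
Qed.

Lemma hcommon_diag N (H : {set {set 'I_N}}) i : hcommon H i i = hdeg H i.
Proof. by apply: eq_card => h; rewrite !inE andbb. Qed.

Lemma hdeg_gt0 N (H : {set {set 'I_N}}) i : no_isolated H -> (0 < hdeg H i)%N.
Proof. by move=> /(_ i) [h hH ih]; apply/card_gt0P; exists h; rewrite inE hH ih. Qed.

Lemma nlapE (R : realFieldType) N (H : {set {set 'I_N}}) : no_isolated H ->
  nlap R H = diag_mx (\row_i (hdeg H i)%:R^-1) *m \matrix_(i, j) (hcommon H i j)%:R.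
Proof.
move=> noiso; rewrite /nlap /hdegmx invmx_diag => [|i]; last first.
  by rewrite mxE pnatr_eq0 -lt0n hdeg_gt0.
apply/matrixP => i j; rewrite !mul_diag_mx !mxE.
case: eqP => [<-|_]; last by rewrite mulr0n sub0r mulrN opprK.
by rewrite hcommon_diag mulr0 subr0 mulr1n mulVf // pnatr_eq0 -lt0n hdeg_gt0.
Qed.

Section Incidence.
Variables (R : realFieldType) (N m : nat) (e : 'I_m -> {set 'I_N}).
Hypothesis e_inj : injective e.

Definition incmx : 'M[R]_(N, m) := \matrix_(i, j) (i \in e j)%:R.

Lemma card_imset_edges (P : pred {set 'I_N}) :
  #|[set h in [set e j | j : 'I_m] | P h]| = (\sum_j P (e j))%N.
Proof.
rewrite -sum1_card big_mkcond -(big_imset (fun h => P h : nat)) /=; last first.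
  by move=> j j' _ _; apply: e_inj.
rewrite [RHS]big_mkcond /=; apply: eq_bigr => h _.
by rewrite !inE; case: (h \in _); case: (P h).
Qed.

Lemma hdeg_imset i : hdeg [set e j | j : 'I_m] i = (\sum_j (i \in e j))%N.
Proof. exact: card_imset_edges. Qed.

Lemma incmx_mul_tr :
  incmx *m incmx^T = \matrix_(i, i') (hcommon [set e j | j : 'I_m] i i')%:R.
Proof.
apply/matrixP => i i'; rewrite !mxE /hcommon card_imset_edges natr_sum.
apply: eq_bigr => j _; rewrite !mxE.
by case: (i \in e j); case: (i' \in e j); rewrite ?mul1r ?mul0r.
Qed.

End Incidence.

Section Hyperflower.
Variables (N l t : nat) (v : 'I_t * 'I_l -> 'I_N) (h1 : {set 'I_N}).
Hypotheses (t_gt0 : (0 < t)%N) (v_inj : injective v)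
  (h1_compl : ~: h1 = [set v p | p : 'I_t * 'I_l]).

Local Notation petal j := (h1 :|: [set v (z, j) | z : 'I_t]).
Local Notation flower := [set petal j | j : 'I_l].

Lemma v_notin_h1 p : v p \notin h1.
Proof. by rewrite -in_setC h1_compl imset_f. Qed.

Lemma mem_petal_v z j j' : (v (z, j) \in petal j') = (j == j').
Proof.
rewrite in_setU (negbTE (v_notin_h1 _)) /=.
by apply/imsetP/eqP => [[z' _ /v_inj [_ ->]] // | ->]; exists z.
Qed.

Lemma petal_inj : injective (fun j => petal j).
Proof.
move=> j j' /= petal_jj'; apply/eqP; rewrite -(mem_petal_v (Ordinal t_gt0)).
by rewrite -petal_jj' mem_petal_v.
Qed.

Lemma card_flower_vertices : N = (#|h1| + t * l)%N.
Proof.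
by rewrite -{1}(card_ord N) -(cardsC h1) h1_compl card_imset // card_prod !card_ord.
Qed.

Lemma hdeg_flower_h1 i : i \in h1 -> hdeg flower i = l.
Proof.
move=> i_h1; rewrite hdeg_imset; last exact: petal_inj.
by rewrite (eq_bigr (fun _ => 1%N)) ?sum1_card ?card_ord // => j _; rewrite in_setU i_h1.
Qed.

Lemma hdeg_flower_v p : hdeg flower (v p) = 1%N.
Proof.
case: p => z j; rewrite hdeg_imset; last exact: petal_inj.
rewrite (bigD1 j) //= mem_petal_v eqxx big1 // => j' j'_neq.
by rewrite mem_petal_v eq_sym (negbTE j'_neq).
Qed.

Variable R : realFieldType.
Local Notation B := (incmx R (fun j => petal j)).

Lemma flower_incmx_gram :
  B^T *m (diag_mx (\row_i (hdeg flower i)%:R^-1) *m B) =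
  (t%:R)%:M + const_mx (#|h1|%:R / l%:R).
Proof.
apply/matrixP => j j'; rewrite mul_diag_mx !mxE (bigID (mem h1)) /= addrC.
under eq_bigr => i _ do rewrite !mxE.
congr (_ + _); last first.
  rewrite (eq_bigr (fun _ => l%:R^-1)) ?sumr_const ?mulr_natl // => i i_h1.
  by rewrite !mxE !in_setU i_h1 hdeg_flower_h1 // mul1r mulr1.
rewrite (eq_bigl (mem (~: h1))) => [|i]; last by rewrite !inE.
rewrite h1_compl big_imset /=; last by move=> p q _ _; apply: v_inj.
rewrite (eq_bigr (fun p => (p.2 == j)%:R * (p.2 == j')%:R)) => [|[z j0] _]; last first.
  by rewrite !mem_petal_v hdeg_flower_v invr1 mul1r !(eq_sym j0).
rewrite -(pair_big xpredT xpredT (fun _ j0 => (j0 == j)%:R * (j0 == j')%:R)) /=.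
rewrite (eq_bigr (fun _ => (j == j')%:R)) => [|z _]; last first.
  rewrite (bigD1 j) //= eqxx mul1r big1 ?addr0 // => j0 /negbTE j0_neq.
  by rewrite j0_neq mul0r.
by rewrite sumr_const card_ord; case: (j == j'); rewrite ?mulr1n ?mulr0n ?mul0rn.
Qed.

End Hyperflower.

Lemma flower_compl_center N l t (v : 'I_t * 'I_l -> 'I_N) (h1 : {set 'I_N}) :
  h1 :&: [set v p | p : 'I_t * 'I_l] = set0 ->
  no_isolated [set h1 :|: [set v (z, j) | z : 'I_t] | j : 'I_l] ->
  ~: h1 = [set v p | p : 'I_t * 'I_l].
Proof.
move=> h1_disj noiso; apply/setP => i; rewrite inE; apply/idP/idP => [i_h1 | i_v].
  have [_ /imsetP [j _ ->]] := noiso i.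
  by rewrite in_setU (negbTE i_h1) => /imsetP [z _ ->]; apply: imset_f.
by apply/negP => i_h1; move/setP/(_ i): h1_disj; rewrite !inE i_h1 i_v.
Qed.

Unset Implicit Arguments.

Theorem mainTheorem7 (R : realFieldType) (N l t : nat) (H : {set {set 'I_N}}) :
  (0 < t)%N ->
  no_isolated H ->
  is_hyperflower l t H ->
  char_poly (nlap R H) =
    'X ^+ (N - l) * ('X - (t%:R)%:P) ^+ (l.-1)
      * ('X - (N%:R - (t * l)%:R + t%:R : R)%:P).
Proof.
move=> t_gt0 noiso [v [h1 [v_inj /set0Pn [i0 i0_h1] h1_disj H_def]]]; subst H.
have h1_compl := flower_compl_center h1_disj noiso.
have l_gt0 : (0 < l)%N.
  by have [_ /imsetP [j _ _] _] := noiso i0; exact: leq_ltn_trans (leq0n j) (ltn_ord j).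
have Xl_neq0 : 'X^l != 0 :> {poly R} by rewrite expf_neq0 // polyX_eq0.
apply: (mulIf Xl_neq0).
rewrite nlapE // -incmx_mul_tr; last exact: petal_inj.
rewrite mulmxA char_poly_mulmxC flower_incmx_gram // char_poly_scalar_add_const //.
set k := #|h1|; have N_def := card_flower_vertices v_inj h1_compl.
have l_le_N : (l <= N)%N by rewrite N_def (leq_trans (leq_pmull l t_gt0)) ?leq_addl.
have lk : l%:R * (k%:R / l%:R) = k%:R :> R by rewrite mulrC divfK // pnatr_eq0 -lt0n.
rewrite lk [in N%:R]N_def natrD addrK [t%:R + _]addrC -{1}(subnK l_le_N) exprD.
by rewrite -!mulrA; congr (_ * _); rewrite mulrC -mulrA.
Qed.
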